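(* Let $(\mathcal T,d)$ be a finite metric space with $d^\star=\max_{s,t\in\mathcal T}d(s,t)$, let $\ell:\mathbb R_+\to\mathbb R_+$ be non-decreasing, $L(s,t)=\ell(d(s,t))$, $f:\mathcal X^n\to\mathcal T$, $\varepsilon>0$, and $T\ge1$ an integer. Then for every $x\in\mathcal X^n$, the discrete inverse sensitivity mechanism $M_{\mathrm{disc}}$ with parameter $\varepsilon$ satisfies $$\mathbb E[L(M_{\mathrm{disc}}(x),f(x))]\le\ell(\omega_f(x;T))+\frac{2\ell(d^\star)|\mathcal T|}{\varepsilon}e^{-T\varepsilon/2}.$$
   Context: $d_H$ is the Hamming distance on $\mathcal X^n$. The inverse sensitivity is $\mathrm{len}_f(x;t)=\inf\{d_H(x,x'):f(x')=t\}$ ($\inf\emptyset=+\infty$, $e^{-\infty}=0$). The discrete inverse sensitivity mechanism with parameter $\varepsilon$ outputs $t\in\mathcal T$ with probability $e^{-\mathrm{len}_f(x;t)\varepsilon/2}\big/\sum_{s\in\mathcal T}e^{-\mathrm{len}_f(x;s)\varepsilon/2}$. The local modulus of continuity is $\omega_f(x;k)=\sup\{d(f(x),f(x')):x'\in\mathcal X^n,\ d_H(x,x')\le k\}$. *)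

From HB Require Import structures.
From mathcomp Require Import all_boot all_order all_algebra.
From mathcomp Require Import boolp classical_sets reals.
From mathcomp.analysis Require Import sequences exp.
Set Implicit Arguments. Unset Strict Implicit. Unset Printing Implicit Defensive.
Import Order.TTheory GRing.Theory Num.Theory.
Local Open Scope ring_scope.

Definition hamming (X : eqType) (n : nat) (x y : n.-tuple X) : nat :=
  #|[set i : 'I_n | tnth x i != tnth y i]|.

Definition len_pred (X : eqType) (n : nat) (Tc : Type) (f : n.-tuple X -> Tc)
  (x : n.-tuple X) (t : Tc) : pred nat :=
  fun k => `[< exists x', f x' = t /\ hamming x x' = k >].

(* Inverse sensitivity len_f(x;t): Some (min distance), or None (= +oo) when
   t is not in the range of f. *)
Definition inv_sens (X : eqType) (n : nat) (Tc : Type) (f : n.-tuple X -> Tc)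
  (x : n.-tuple X) (t : Tc) : option nat :=
  match pselect (exists k, len_pred f x t k) with
  | left H => Some (ex_minn H)
  | right _ => None
  end.

(* Unnormalized weight exp(-len_f(x;t) eps / 2), with exp(-oo) = 0. *)
Definition disc_weight (R : realType) (X : eqType) (n : nat) (Tc : Type)
  (f : n.-tuple X -> Tc) (eps : R) (x : n.-tuple X) (t : Tc) : R :=
  match inv_sens f x t with
  | Some k => expR (- (k%:R * eps / 2))
  | None => 0
  end.

Definition disc_prob (R : realType) (X : eqType) (n : nat) (Tc : finType)
  (f : n.-tuple X -> Tc) (eps : R) (x : n.-tuple X) (t : Tc) : R :=
  disc_weight f eps x t / \sum_(s : Tc) disc_weight f eps x s.

Definition loc_mod (R : realType) (X : eqType) (n : nat) (Tc : Type)
  (d : Tc -> Tc -> R) (f : n.-tuple X -> Tc) (x : n.-tuple X) (k : nat) : R :=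
  sup [set d (f x) (f x') | x' in [set x' | (hamming x x' <= k)%N]].

Definition diam (R : realType) (Tc : finType) (d : Tc -> Tc -> R) : R :=
  \big[Num.max/0]_(s : Tc) \big[Num.max/0]_(t : Tc) d s t.

Definition is_metric (R : realType) (Tc : Type) (d : Tc -> Tc -> R) : Prop :=
  (forall s t, 0 <= d s t) /\ (forall s t, d s t = 0 <-> s = t) /\
  (forall s t, d s t = d t s) /\ (forall s t u, d s u <= d s t + d t u).

From HB Require Import structures.
From mathcomp Require Import all_boot all_order all_algebra.
From mathcomp Require Import boolp classical_sets reals.
From mathcomp.analysis Require Import sequences exp.
From mathcomp Require Import ring.
Import Order.TTheory GRing.Theory Num.Theory.
Local Open Scope ring_scope.
Set Implicit Arguments. Unset Strict Implicit.

(* Write w_t = exp(-len_f(x;t) eps/2) for the weights, W for their sum and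
   p_t = w_t / W.  Since len_f(x; f x) = 0, the true value has weight 1, so
   W >= 1 and p_t <= w_t.  Fix T and split the outputs t:
   - if len_f(x;t) <= T, some x' at Hamming distance <= T from x maps to t,
     so d(t, f x) <= omega_f(x;T) and the loss is at most ell(omega_f(x;T));
   - otherwise p_t <= w_t <= exp(-(T+1) eps/2), and the loss is at most
     ell(d* ) since every distance is at most the diameter.
   So every term p_t ell(d(t, f x)) is at most
   ell(omega_f(x;T)) p_t + ell(d* ) exp(-(T+1) eps/2).  Summing over t with
   sum_t p_t = 1 gives ell(omega_f(x;T)) + |T| ell(d* ) exp(-(T+1) eps/2), and
   exp(-eps/2) <= 2/eps turns the tail into the stated one. *)

Lemma le_diam (R : realType) (Tc : finType) (d : Tc -> Tc -> R) (s t : Tc) :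
  d s t <= diam d.
Proof.
apply: le_trans (le_bigmax _ (fun s => \big[Num.max/0]_(t : Tc) d s t) s).
exact: le_bigmax.
Qed.

Section InverseSensitivity.
Variables (X : eqType) (n : nat) (Tc : Type) (f : n.-tuple X -> Tc).

Lemma hamming_refl (x : n.-tuple X) : hamming x x = 0%N.
Proof. by apply/eqP; rewrite cards_eq0; apply/eqP/setP => i; rewrite !inE eqxx. Qed.

Lemma inv_sens_witness (x : n.-tuple X) (t : Tc) (k : nat) :
  inv_sens f x t = Some k -> exists x', f x' = t /\ hamming x x' = k.
Proof.
rewrite /inv_sens; case: pselect => // H [<-].
by case: ex_minnP => m /asboolP.
Qed.

Lemma inv_sens_self (x : n.-tuple X) : inv_sens f x (f x) = Some 0%N.
Proof.
have len0 : len_pred f x (f x) 0 by apply/asboolP; exists x; rewrite hamming_refl.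
rewrite /inv_sens; case: pselect => [H|]; last by case; exists 0%N.
by congr Some; case: ex_minnP => m _ /(_ 0%N len0); rewrite leqn0 => /eqP.
Qed.

Lemma inv_sens_near_or_far (x : n.-tuple X) (t : Tc) (T : nat) :
  (exists2 m, inv_sens f x t = Some m & m <= T)%N \/
  (forall k, inv_sens f x t = Some k -> T < k)%N.
Proof.
case: (inv_sens f x t) => [m|]; last by right.
case: (leqP m T) => [mT|Tm]; first by left; exists m.
by right => k [<-].
Qed.

End InverseSensitivity.

Section Weights.
Variables (R : realType) (X : eqType) (n : nat) (Tc : finType).
Variables (f : n.-tuple X -> Tc) (eps : R) (x : n.-tuple X).
Hypothesis eps_gt0 : 0 < eps.

Let W := \sum_(s : Tc) disc_weight f eps x s.

Lemma disc_weight_ge0 (t : Tc) : 0 <= disc_weight f eps x t.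
Proof. by rewrite /disc_weight; case: inv_sens => // k; exact: expR_ge0. Qed.

(* The normalising constant is at least the weight 1 of the true value. *)
Lemma disc_norm_ge1 : 1 <= W.
Proof.
rewrite /W (bigD1 (f x)) //= {1}/disc_weight inv_sens_self mul0r mul0r oppr0.
by rewrite expR0 lerDl sumr_ge0 // => t _; exact: disc_weight_ge0.
Qed.

Lemma disc_norm_gt0 : 0 < W.
Proof. exact: lt_le_trans disc_norm_ge1. Qed.

Lemma disc_prob_ge0 (t : Tc) : 0 <= disc_prob f eps x t.
Proof. by rewrite divr_ge0 ?disc_weight_ge0 ?ltW ?disc_norm_gt0. Qed.

Lemma disc_prob_sum1 : \sum_(t : Tc) disc_prob f eps x t = 1.
Proof. by rewrite -mulr_suml divff // gt_eqF ?disc_norm_gt0. Qed.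

(* Since the normaliser is at least 1, probabilities are bounded by weights. *)
Lemma disc_prob_le_weight (t : Tc) : disc_prob f eps x t <= disc_weight f eps x t.
Proof.
by rewrite ler_pdivrMr ?disc_norm_gt0 // ler_peMr ?disc_weight_ge0 ?disc_norm_ge1.
Qed.

Lemma disc_weight_far (T : nat) (t : Tc) :
  (forall k, inv_sens f x t = Some k -> T < k)%N ->
  disc_weight f eps x t <= expR (- (T.+1%:R * eps / 2)).
Proof.
rewrite /disc_weight; case: inv_sens => [k /(_ k erefl) Tk|_]; last exact: expR_ge0.
by rewrite ler_expR lerN2 ler_pM2r ?invr_gt0 ?ltr0n // ler_pM2r // ler_nat.
Qed.

End Weights.

Section LocalModulus.
Variables (R : realType) (X : eqType) (n : nat) (Tc : finType).
Variables (d : Tc -> Tc -> R) (f : n.-tuple X -> Tc) (x : n.-tuple X).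

(* On a finite space the supremum defining omega_f(x;k) is bounded by the
   diameter, so it dominates each of its elements. *)
Lemma le_loc_mod (k : nat) (x' : n.-tuple X) :
  (hamming x x' <= k)%N -> d (f x) (f x') <= loc_mod d f x k.
Proof.
move=> near_x'; apply: ub_le_sup; last by exists x'.
by exists (diam d) => _ [y _ <-]; exact: le_diam.
Qed.

(* For a nonnegative d the modulus is nonnegative, witnessed by x' = x. *)
Lemma loc_mod_ge0 (k : nat) :
  (forall s t, 0 <= d s t) -> 0 <= loc_mod d f x k.
Proof.
by move=> d_ge0; apply: le_trans (d_ge0 (f x) (f x)) (le_loc_mod _); rewrite hamming_refl.
Qed.

Lemma inv_sens_le_loc_mod (k m : nat) (t : Tc) :
  inv_sens f x t = Some m -> (m <= k)%N -> d (f x) t <= loc_mod d f x k.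
Proof.
move=> len_t mk; have [x' [<- dist_x']] := inv_sens_witness len_t.
by apply: le_loc_mod; rewrite dist_x'.
Qed.

End LocalModulus.

(* exp(-eps/2) <= 2/eps, i.e. exp(eps/2) >= eps/2; it converts the tail
   exp(-(T+1) eps/2) into the stated (2/eps) exp(-T eps/2). *)
Lemma expR_succ_le (R : realType) (eps : R) (T : nat) : 0 < eps ->
  expR (- (T.+1%:R * eps / 2)) <= 2 / eps * expR (- (T%:R * eps / 2)).
Proof.
move=> eps_gt0.
have -> : expR (- (T.+1%:R * eps / 2)) = expR (- (eps / 2)) * expR (- (T%:R * eps / 2)).
  by rewrite -expRD; congr expR; rewrite -addn1 natrD; ring.
rewrite ler_wpM2r ?expR_ge0 // expRN -(invf_div eps 2).
rewrite ler_pV2 ?inE ?unitfE ?gt_eqF ?expR_gt0 ?divr_gt0 //.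
by apply: le_trans (expR_ge1Dx _); rewrite lerDr.
Qed.

Section PointwiseBound.
Variables (R : realType) (X : eqType) (n : nat) (Tc : finType).
Variables (d : Tc -> Tc -> R) (ell : R -> R) (f : n.-tuple X -> Tc).
Variables (eps : R) (T : nat) (x : n.-tuple X).
Hypothesis d_ge0 : forall s t, 0 <= d s t.
Hypothesis d_sym : forall s t, d s t = d t s.
Hypothesis ell_ge0 : forall r, 0 <= r -> 0 <= ell r.
Hypothesis ell_mono : forall a b, 0 <= a -> a <= b -> ell a <= ell b.
Hypothesis eps_gt0 : 0 < eps.

Lemma risk_term_le (t : Tc) :
  disc_prob f eps x t * ell (d t (f x)) <=
  ell (loc_mod d f x T) * disc_prob f eps x t
  + ell (diam d) * expR (- (T.+1%:R * eps / 2)).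
Proof.
have p_ge0 : 0 <= disc_prob f eps x t by exact: disc_prob_ge0.
have ell_diam_ge0 : 0 <= ell (diam d).
  by apply: ell_ge0; exact: le_trans (d_ge0 t t) (le_diam d t t).
have [[m len_t near]|far] := inv_sens_near_or_far f x t T.
  have ell_near : ell (d t (f x)) <= ell (loc_mod d f x T).
    by apply: ell_mono => //; rewrite d_sym; exact: inv_sens_le_loc_mod len_t near.
  rewrite mulrC; apply: ler_wpDr; first by rewrite mulr_ge0 ?expR_ge0.
  by rewrite ler_wpM2r.
have ell_far : ell (d t (f x)) <= ell (diam d).
  by apply: ell_mono; [exact: d_ge0 | exact: le_diam].
apply: ler_wpDl; first by rewrite mulr_ge0 // ell_ge0 // loc_mod_ge0.
rewrite mulrC ler_pM ?ell_ge0 //.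
exact: le_trans (disc_prob_le_weight f eps x t) (disc_weight_far eps_gt0 far).
Qed.

End PointwiseBound.

Unset Implicit Arguments. Set Strict Implicit.

(* Lemma B.1. *)
Theorem lemmaB1 (R : realType) (Tc : finType) (d : Tc -> Tc -> R)
  (ell : R -> R) (X : eqType) (n : nat) (f : n.-tuple X -> Tc) (eps : R)
  (T : nat) :
  is_metric d ->
  (forall r, 0 <= r -> 0 <= ell r) ->
  (forall a b, 0 <= a -> a <= b -> ell a <= ell b) ->
  0 < eps -> (1 <= T)%N ->
  forall x : n.-tuple X,
    \sum_(t : Tc) disc_prob f eps x t * ell (d t (f x))
    <= ell (loc_mod d f x T)
       + 2 * ell (diam d) * #|Tc|%:R / eps * expR (- (T%:R * eps / 2)).
Proof.
move=> [d_ge0 [_ [d_sym _]]] ell_ge0 ell_mono eps_gt0 _ x.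
have ell_diam_ge0 : 0 <= ell (diam d).
  by apply: ell_ge0; exact: le_trans (d_ge0 (f x) (f x)) (le_diam d _ _).
set tail := expR (- (T.+1%:R * eps / 2)).
apply: le_trans (ler_sum _ (fun t _ => risk_term_le f T x d_ge0 d_sym ell_ge0 ell_mono eps_gt0 t)) _.
have sum_tail : \sum_(t : Tc) ell (diam d) * tail = ell (diam d) * tail * #|Tc|%:R.
  by rewrite sumr_const mulr_natr.
rewrite big_split /= -mulr_sumr disc_prob_sum1 mulr1 lerD2l sum_tail.
(* Abstract |T| so that ring does not try to compute the cardinal. *)
move: (ler0n R #|Tc|); move: #|Tc|%:R => N N_ge0.
have -> : 2 * ell (diam d) * N / eps * expR (- (T%:R * eps / 2)) =
    ell (diam d) * (2 / eps * expR (- (T%:R * eps / 2))) * N by ring.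
by rewrite ler_wpM2r // ler_wpM2l // expR_succ_le.
Qed.
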